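(* Let $\mathcal S$ be a finite set, let $0<\lambda<1$, and let $N_1,\dots,N_t$ be row-stochastic matrices indexed by $\mathcal S\times\mathcal S$ with $\|N_k\|\le\lambda$ for all $k$. Let $\boldsymbol\delta\in\mathbb R^{\mathcal S\times\mathcal S}$ satisfy $\sum_{s}\boldsymbol\delta(s)=0$ and $\|\boldsymbol\delta\|_1=2\delta$ for a scalar $\delta>0$, and let $S^*\subseteq\mathcal S\times\mathcal S$ satisfy $\sum_{s\in S^*}\boldsymbol\delta(s)=\delta$. Suppose $\hat M_k=N_k+\mathbf 1\boldsymbol\delta^T$ is row-stochastic for each $k$. Put $\hat M=\hat M_1\hat M_2\cdots\hat M_t$, $N=N_1N_2\cdots N_t$ and $E=\hat M-N$. Then all rows of $E$ are equal, and in each row the entries in the columns indexed by $S^*$ sum to at least $\lambda'\delta$, where $\lambda'=1-\frac{\lambda}{1-\lambda}$.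
   Context: For a real square matrix $M$, $\|M\|=\max_{x\neq 0,\ x\perp\mathbf 1}\|x^TM\|_1/\|x\|_1$, where $\mathbf 1$ is the all-ones vector. In the application, $N_k=M_{e_k,i}\otimes M_{e_k,j}$ is the tensor (Kronecker) product of the transition matrices of two characters $i,j$ on the $k$-th edge of a root-to-leaf path, i.e. $(M_{e,i}\otimes M_{e,j})_{(a,b),(a',b')}=M_{e,i}(a,a')M_{e,j}(b,b')$, and $\hat M_k$ is the joint transition matrix of the dependent pair. *)

From HB Require Import structures.
From mathcomp Require Import all_boot all_order all_algebra.
Set Implicit Arguments. Unset Strict Implicit. Unset Printing Implicit Defensive.
Import Order.TTheory GRing.Theory Num.Theory.
Local Open Scope ring_scope.

Section Defs.
Variables (R : realFieldType) (T : finType).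

Definition fmat := T -> T -> R.

Definition fmmul (A B : fmat) : fmat := fun i j => \sum_k A i k * B k j.

Definition fmid : fmat := fun i j => (i == j)%:R.

Definition fmprod (Ms : seq fmat) : fmat := foldr fmmul fmid Ms.

Definition row_stochastic (M : fmat) : Prop :=
  (forall i j, 0 <= M i j) /\ (forall i, \sum_j M i j = 1).

Definition vmul (x : T -> R) (M : fmat) : T -> R := fun j => \sum_i x i * M i j.

Definition l1 (x : T -> R) : R := \sum_i `|x i|.

Definition opnorm_le (M : fmat) (lam : R) : Prop :=
  forall x : T -> R, (exists i, x i != 0) -> \sum_i x i = 0 ->
    l1 (vmul x M) / l1 x <= lam.

Definition add_rank1 (N : fmat) (d : T -> R) : fmat := fun i j => N i j + d j.

End Defs.

From HB Require Import structures.
From mathcomp Require Import all_boot all_order all_algebra.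
From mathcomp Require Import ring lra.
Import Order.TTheory GRing.Theory Num.Theory.
Set Implicit Arguments. Unset Strict Implicit. Unset Printing Implicit Defensive.
Local Open Scope ring_scope.

(* Write P(s) for the product of the N_k along a sequence s of
   indices.  Because every N_k has unit row sums and the entries of d sum to
   zero, a product of rank-one perturbations N_k + 1 d^T is again a rank-one
   perturbation of P(s):  Mhat(k :: s) = P(k :: s) + 1 e(k :: s)^T with
   e(k :: s) = e(s) + d^T P(s).  Hence E = 1 e^T has equal rows, and
   e = d^T P(s_0) + d^T P(s_1) + ... is a sum of row vectors, the last one
   being d itself.  On S* the vector d contributes exactly delta; every other
   term d^T P(s') has zero total sum and, by the norm bound iterated,
   l1-norm at most lam^|s'| * 2 delta, so its mass on S* is at least
   -lam^|s'| delta.  Summing the geometric series gives the bound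
   delta (1 - lam/(1 - lam)). *)

Section MatrixFacts.
Variables (R : realFieldType) (T : finType).
Implicit Types (M A B : fmat R T) (x v : T -> R).

Definition unit_rowsums M : Prop := forall i, \sum_j M i j = 1.

Lemma fmid_unit_rowsums : unit_rowsums (@fmid R T).
Proof.
move=> i; rewrite /fmid (bigD1 i) //= eqxx big1 ?addr0 // => j.
by rewrite eq_sym => /negbTE ->.
Qed.

Lemma fmmul_unit_rowsums A B :
  unit_rowsums A -> unit_rowsums B -> unit_rowsums (fmmul A B).
Proof.
move=> rsA rsB i; rewrite /fmmul exchange_big /= -(rsA i).
by apply: eq_bigr => m _; rewrite -mulr_sumr rsB mulr1.
Qed.

Lemma vmul_fmid x : vmul x (@fmid R T) =1 x.
Proof.
move=> j; rewrite /vmul /fmid (bigD1 j) //= eqxx mulr1 big1 ?addr0 // => i.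
by move=> /negbTE ->; rewrite mulr0.
Qed.

Lemma vmul_fmmul x A B : vmul x (fmmul A B) =1 vmul (vmul x A) B.
Proof.
move=> j; rewrite /vmul /fmmul.
under eq_bigr do rewrite mulr_sumr.
rewrite exchange_big; apply: eq_bigr => k _; rewrite mulr_suml.
by apply: eq_bigr => i _; rewrite mulrA.
Qed.

Lemma vmul_total x M : unit_rowsums M -> \sum_j vmul x M j = \sum_i x i.
Proof.
move=> rsM; rewrite /vmul exchange_big; apply: eq_bigr => i _.
by rewrite -mulr_sumr rsM mulr1.
Qed.

Lemma l1_ge0 x : 0 <= l1 x.
Proof. by apply: sumr_ge0 => i _; apply: normr_ge0. Qed.

(* The norm bound ||M|| <= lam, restated without the quotient: it also
   covers the zero vector. *)
Lemma opnorm_contract M lam x :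
  opnorm_le M lam -> 0 <= lam -> \sum_i x i = 0 ->
  l1 (vmul x M) <= lam * l1 x.
Proof.
move=> normM lam_ge0 x_sum0.
have [/existsP x_nz | /existsPn x0] := boolP [exists i, x i != 0].
  have l1x_gt0 : 0 < l1 x.
    case: x_nz => i xi_nz; rewrite /l1 (bigD1 i) //=.
    by rewrite ltr_pwDl ?normr_gt0 //; apply: sumr_ge0 => j _.
  by rewrite -ler_pdivrMr //; apply: normM.
have -> : l1 (vmul x M) = 0.
  rewrite /l1 big1 // => j _; rewrite /vmul big1 ?normr0 // => i _.
  by move: (x0 i); rewrite negbK => /eqP ->; rewrite mul0r.
by rewrite mulr_ge0 ?l1_ge0.
Qed.

Lemma zero_sum_mass_ge v (A : {set T}) :
  \sum_i v i = 0 -> - (l1 v / 2) <= \sum_(i in A) v i.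
Proof.
move=> v_sum0; rewrite (bigID (mem A)) /= in v_sum0.
have l1_split : l1 v = \sum_(i in A) `|v i| + \sum_(i | i \notin A) `|v i|.
  by rewrite /l1 (bigID (mem A)).
have in_A : - \sum_(i in A) v i <= \sum_(i in A) `|v i|.
  by rewrite -sumrN; apply: ler_sum => i _; rewrite -normrN ler_norm.
have out_A : \sum_(i | i \notin A) v i <= \sum_(i | i \notin A) `|v i|.
  by apply: ler_sum => i _; rewrite ler_norm.
rewrite l1_split; lra.
Qed.

End MatrixFacts.

Lemma geometric_sum_le (R : realFieldType) (lam : R) (n : nat) :
  0 <= lam -> lam < 1 -> \sum_(m < n) lam ^+ m.+1 <= lam / (1 - lam).
Proof.
move=> lam_ge0 lam_lt1; have gap : 0 < 1 - lam by rewrite subr_gt0.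
have closed_form : (1 - lam) * \sum_(m < n) lam ^+ m = 1 - lam ^+ n.
  by rewrite -[1 - lam]opprB mulNr -subrX1 opprB.
under eq_bigr do rewrite exprS.
rewrite -mulr_sumr ler_pdivlMr // -mulrA [_ * (1 - lam)]mulrC closed_form.
by rewrite ler_piMr // gerBl exprn_ge0.
Qed.

Section Products.
Variables (R : realFieldType) (T : finType) (I : Type).
Variables (Nk : I -> fmat R T) (d : T -> R).
Hypothesis Nk_rowsums : forall k, unit_rowsums (Nk k).
Hypothesis d_sum0 : \sum_j d j = 0.

Local Notation P s := (fmprod [seq Nk k | k <- s]).
Local Notation Phat s := (fmprod [seq add_rank1 (Nk k) d | k <- s]).

Lemma P_unit_rowsums s : unit_rowsums (P s).
Proof.
elim: s => [|k s IH]; first exact: fmid_unit_rowsums.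
exact: fmmul_unit_rowsums.
Qed.

(* The common row e(s) of Phat(s) - P(s). *)
Fixpoint err_row (s : seq I) : T -> R :=
  if s is k :: s' then fun j => err_row s' j + vmul d (P s') j
  else fun _ => 0.

Lemma Phat_decomp s i j : Phat s i j = P s i j + err_row s j.
Proof.
elim: s i j => [|k s IH] i j; first by rewrite /= addr0.
rewrite /= /fmmul /add_rank1 /vmul.
under eq_bigr do rewrite IH mulrDl !mulrDr.
rewrite !big_split /= -!mulr_suml Nk_rowsums d_sum0 mul0r mul1r addr0.
ring.
Qed.

Lemma P_contract lam s x :
  (forall k, opnorm_le (Nk k) lam) -> 0 <= lam -> \sum_i x i = 0 ->
  l1 (vmul x (P s)) <= lam ^+ size s * l1 x.
Proof.
move=> normN lam_ge0; elim: s x => [|k s IH] x x_sum0.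
  by rewrite expr0 mul1r /l1; under eq_bigr do rewrite vmul_fmid.
have shift : l1 (vmul x (P (k :: s))) = l1 (vmul (vmul x (Nk k)) (P s)).
  by apply: eq_bigr => j _; rewrite /= vmul_fmmul.
have Nx_sum0 : \sum_j vmul x (Nk k) j = 0 by rewrite vmul_total.
rewrite shift; apply: le_trans (IH _ Nx_sum0) _.
rewrite /= exprSr -mulrA ler_wpM2l ?exprn_ge0 //.
exact: opnorm_contract.
Qed.

Lemma err_row_mass_ge lam delta (Sstar : {set T}) k s :
  (forall k, opnorm_le (Nk k) lam) -> 0 <= lam ->
  l1 d = 2 * delta -> \sum_(j in Sstar) d j = delta ->
  delta - delta * \sum_(m < size s) lam ^+ m.+1 <=
    \sum_(j in Sstar) err_row (k :: s) j.
Proof.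
move=> normN lam_ge0 l1d d_Sstar.
elim: s k => [|k' s IH] k.
  rewrite big_ord0 mulr0 subr0 -d_Sstar.
  by under [X in _ <= X]eq_bigr do rewrite /= add0r vmul_fmid.
set v := vmul d (P (k' :: s)).
have v_sum0 : \sum_i v i = 0.
  by rewrite /v vmul_total; [exact: d_sum0 | exact: P_unit_rowsums].
have v_small : l1 v <= lam ^+ (size s).+1 * (2 * delta).
  by rewrite -l1d; apply: P_contract.
have v_mass := zero_sum_mass_ge Sstar v_sum0.
have -> : \sum_(j in Sstar) err_row [:: k, k' & s] j =
          \sum_(j in Sstar) err_row (k' :: s) j + \sum_(j in Sstar) v j.
  by rewrite -big_split.
rewrite /= big_ord_recr /= mulrDr opprD addrA.
have := IH k'; lra.
Qed.

End Products.

Theorem mainTheorem10 (R : realFieldType) (S : finType) (lam : R)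
  (t : nat) (Nk : 'I_t -> fmat R (S * S)%type) (d : (S * S)%type -> R)
  (delta : R) (Sstar : {set (S * S)%type}) :
  0 < lam -> lam < 1 ->
  (0 < t)%N ->
  (forall k, row_stochastic (Nk k)) ->
  (forall k, opnorm_le (Nk k) lam) ->
  \sum_s d s = 0 ->
  0 < delta ->
  l1 d = 2 * delta ->
  \sum_(s in Sstar) d s = delta ->
  (forall k, row_stochastic (add_rank1 (Nk k) d)) ->
  let Mhat := fmprod [seq add_rank1 (Nk k) d | k <- enum 'I_t] in
  let N := fmprod [seq Nk k | k <- enum 'I_t] in
  let E := fun i j => Mhat i j - N i j in
  (forall i i' j, E i j = E i' j) /\
  (forall i, (1 - lam / (1 - lam)) * delta <= \sum_(j in Sstar) E i j).
Proof.
move=> lam_gt0 lam_lt1 t_gt0 Nk_stoch normN d_sum0 delta_gt0 l1d d_Sstar _.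
move=> Mhat N E.
have Nk_rowsums : forall k, unit_rowsums (Nk k) by move=> k; case: (Nk_stoch k).
have E_row i j : E i j = err_row Nk d (enum 'I_t) j.
  by rewrite /E /Mhat /N Phat_decomp // addrAC subrr add0r.
split=> [i i' j | i]; first by rewrite !E_row.
under eq_bigr do rewrite E_row.
have [k [s enum_t]] : exists k s, enum 'I_t = k :: s.
  by case: (enum 'I_t) (size_enum_ord t) => [|k s] size_t;
    [rewrite -size_t in t_gt0 | exists k, s].
have geom := geometric_sum_le (size s) (ltW lam_gt0) lam_lt1.
have mass := err_row_mass_ge Nk_rowsums d_sum0 k s normN (ltW lam_gt0) l1d d_Sstar.
rewrite enum_t; apply: le_trans mass.
rewrite mulrBl mul1r [_ * delta]mulrC.
by rewrite lerD2l lerN2; apply: ler_wpM2l => //; exact: ltW.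
Qed.
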